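(* For $t>1$, let $\sigma_t=\prod_{n=1}^{\infty} n^{1/t^n}$. Then $$\gamma\!\left(\frac1t\right)=t\log\frac{t}{(t-1)\sigma_t^{\,t-1}}.$$ In particular, $$\lim_{t\to 0^+} t\,\sigma_{t+1}^{\,t}=e^{-\gamma},$$ where $\gamma=\gamma(1)$ is Euler's constant.
   Context: $\gamma(z)=\sum_{n=1}^{\infty} z^{n-1}\left(\frac{1}{n}-\log\frac{n+1}{n}\right)$ for $|z|\le1$. The product $\sigma_t=1^{1/t}2^{1/t^2}3^{1/t^3}\cdots$ (the generalized Somos constant) converges for $t>1$. *)

From Stdlib Require Import Reals.
From Coquelicot Require Import Coquelicot.
Open Scope R_scope.

(* gamma(z) = sum_{n>=1} z^(n-1) (1/n - log((n+1)/n)), reindexed with k = n-1. *)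
Definition gamma_fn (z : R) : R :=
  Series (fun k : nat => z ^ k * (/ INR (S k) - ln (INR (S (S k)) / INR (S k)))).

Fixpoint somos_partial (t : R) (N : nat) : R :=
  match N with
  | O => 1
  | S k => somos_partial t k * Rpower (INR (S k)) (/ t ^ (S k))
  end.

Definition somos_sigma (t : R) : R := real (Lim_seq (somos_partial t)).

(* With x = 1/t we have ln sigma_t = sum_{n>=1} x^n ln n.  Writing
   ln((n+1)/n) = ln(n+1) - ln n, the logarithmic part of gamma(x) becomes
   (1/x^2 - 1/x) ln sigma_t, while sum_{n>=1} x^(n-1)/n = -ln(1-x)/x; this is the
   identity.  Taken at t+1 it reads t sigma_{t+1}^t = (t+1) exp(-gamma(1/(t+1))/(t+1)),
   so the limit follows from Abel's theorem: gamma is a power series whose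
   coefficients have the convergent sum gamma(1). *)

From Stdlib Require Import Reals Lra.
From Coquelicot Require Import Coquelicot.
Open Scope R_scope.

Lemma ln_le_sub_1 y : 0 < y -> ln y <= y - 1.
Proof. intro Hy. pose proof (exp_ineq1_le (ln y)) as H. rewrite exp_ln in H; lra. Qed.

Lemma ln_ge_1_sub_inv y : 0 < y -> 1 - / y <= ln y.
Proof.
  intro Hy. pose proof (ln_le_sub_1 (/ y) (Rinv_0_lt_compat y Hy)) as H.
  rewrite ln_Rinv in H; lra.
Qed.

Lemma INR_S_ge_1 n : 1 <= INR (S n).
Proof. rewrite S_INR. pose proof (pos_INR n). lra. Qed.

Lemma Rinv_open_unit t : 1 < t -> 0 < / t < 1.
Proof.
  intro Ht. split; [apply Rinv_0_lt_compat; lra|].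
  rewrite <- Rinv_1. apply Rinv_lt_contravar; lra.
Qed.

Lemma CV_radius_ge_1 (a : nat -> R) M :
  (forall n, Rabs (a n) <= M) -> Rbar_le 1 (CV_radius a).
Proof.
  intro HM. apply (proj1 (CV_radius_bounded a)).
  exists M. intro n. rewrite pow1, Rmult_1_r. apply HM.
Qed.

Lemma Rabs_lt_CV_radius_one x : Rabs x < 1 -> Rbar_lt (Rabs x) (CV_radius (fun _ => 1)).
Proof.
  intro Hx. apply Rbar_lt_le_trans with 1; [exact Hx|].
  apply (CV_radius_ge_1 _ 1). intro. rewrite Rabs_R1. lra.
Qed.

(* Coquelicot's [Abel] applies only when 1 is exactly the radius of convergence;
   beyond it, continuity of [PSeries] suffices. *)
Lemma filterlim_PSeries_at_left_1 (a : nat -> R) :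
  ex_series a -> filterlim (PSeries a) (at_left 1) (locally (Series a)).
Proof.
  intro Ha. rewrite <- PSeries_1.
  destruct (filterlim_bounded a (ex_intro _ 0 (ex_series_lim_0 a Ha))) as [M HM].
  destruct (Rbar_le_lt_or_eq_dec _ _ (CV_radius_ge_1 a M HM)) as [Hlt | Heq].
  - apply (filterlim_filter_le_1 _ (filter_le_within _)).
    apply continuity_pt_filterlim, PSeries_continuity.
    rewrite Rabs_R1. exact Hlt.
  - pose proof (Abel a) as H. rewrite <- Heq in H. apply H.
    + simpl; lra.
    + exact I.
    + apply ex_pseries_1, Ha.
Qed.

Lemma ex_series_nonneg_bounded (a : nat -> R) M :
  (forall n, 0 <= a n) -> (forall N, sum_n a N <= M) -> ex_series a.
Proof.
  intros Ha HM.
  destruct (ex_finite_lim_seq_incr (sum_n a) M) as [l Hl]; [|exact HM|].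
  - intro n. rewrite sum_Sn. pose proof (Ha (S n)). unfold plus; simpl; lra.
  - exists l. exact Hl.
Qed.

Lemma PSeries_one x : Rabs x < 1 -> PSeries (fun _ => 1) x = / (1 - x).
Proof.
  intro Hx. apply is_pseries_unique, is_pseries_R.
  apply is_series_ext with (fun n => x ^ n); [intro n; now rewrite Rmult_1_l|].
  apply is_series_geom, Hx.
Qed.

Lemma PSeries_PS_Int_one x : Rabs x < 1 -> PSeries (PS_Int (fun _ => 1)) x = - ln (1 - x).
Proof.
  intro Hx.
  set (h y := PSeries (PS_Int (fun _ => 1)) y + ln (1 - y)).
  assert (Hh : forall y, Rabs y < 1 -> is_derive h y 0).
  { intros y Hy. replace 0 with (/ (1 - y) + - / (1 - y)) by ring.
    assert (y < 1) by (apply Rabs_def2 in Hy; lra).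
    apply (@is_derive_plus R_AbsRing R_NormedModule).
    - assert (Hd : forall n, PS_derive (PS_Int (fun _ => 1)) n = 1).
      { intro n. unfold PS_derive, PS_Int. field. pose proof (INR_S_ge_1 n). lra. }
      rewrite <- (PSeries_one y Hy), <- (PSeries_ext _ _ y Hd).
      apply is_derive_PSeries. rewrite CV_radius_Int.
      exact (Rabs_lt_CV_radius_one y Hy).
    - auto_derive; [lra | field; lra]. }
  assert (Hh0 : h 0 = 0).
  { unfold h. rewrite PSeries_0, Rminus_0_r, ln_1. simpl. ring. }
  assert (Hhx : h x = h 0).
  { apply Rabs_def2 in Hx as [Hx1 Hx2].
    destruct (Rtotal_order x 0) as [Hneg | [-> | Hpos]]; [| reflexivity |].
    - apply eq_is_derive; [|exact Hneg].
      intros t Ht. apply Hh. apply Rabs_def1; lra.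
    - symmetry. apply eq_is_derive; [|exact Hpos].
      intros t Ht. apply Hh. apply Rabs_def1; lra. }
  rewrite Hh0 in Hhx. unfold h in Hhx. lra.
Qed.

Lemma is_series_pow_div_S x : x <> 0 -> Rabs x < 1 ->
  is_series (fun k => x ^ k / INR (S k)) (- ln (1 - x) / x).
Proof.
  intros Hx0 Hx.
  assert (H : is_pseries (PS_Int (fun _ => 1)) x (- ln (1 - x))).
  { rewrite <- PSeries_PS_Int_one by exact Hx.
    apply PSeries_correct, CV_radius_inside. rewrite CV_radius_Int.
    exact (Rabs_lt_CV_radius_one x Hx). }
  apply is_pseries_R in H.
  assert (H1 : is_series (fun k => PS_Int (fun _ => 1) (S k) * x ^ S k) (- ln (1 - x))).
  { apply (is_series_incr_1 (fun n => PS_Int (fun _ => 1) n * x ^ n)).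
    unfold plus; simpl. rewrite Rmult_0_l, Rplus_0_r. exact H. }
  refine (is_series_ext _ _ _ _ (is_series_scal_r (/ x) _ _ H1)).
  intro k. unfold PS_Int. rewrite <- tech_pow_Rmult.
  pose proof (INR_S_ge_1 k). apply Rminus_diag_uniq. field. split; [lra | exact Hx0].
Qed.

Definition log_somos_term (x : R) (k : nat) : R := x ^ S k * ln (INR (S k)).

Lemma ex_series_log_somos_term x : Rabs x < 1 -> ex_series (log_somos_term x).
Proof.
  intro Hx.
  set (b k := Rabs x * Rabs (PS_derive (fun _ => 1) k * x ^ k)).
  apply (@ex_series_le R_AbsRing R_CompleteNormedModule _ b).
  - intro k. change (norm (log_somos_term x k)) with (Rabs (log_somos_term x k)).
    unfold b, log_somos_term, PS_derive. rewrite Rmult_1_r, <- tech_pow_Rmult, !Rabs_mult.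
    pose proof (INR_S_ge_1 k).
    assert (0 <= ln (INR (S k)) <= INR (S k)).
    { split; [rewrite <- ln_1; apply ln_le; lra|]. pose proof (ln_le_sub_1 (INR (S k))). lra. }
    rewrite (Rabs_pos_eq (ln _)), (Rabs_pos_eq (INR _)) by lra.
    pose proof (Rabs_pos x). pose proof (Rabs_pos (x ^ k)).
    rewrite Rmult_assoc, (Rmult_comm (INR _)).
    apply Rmult_le_compat_l; [lra|]. apply Rmult_le_compat_l; lra.
  - apply (ex_series_scal_l (V := R_NormedModule) (Rabs x)
             (fun k => Rabs (PS_derive (fun _ => 1) k * x ^ k))), CV_disk_inside.
    rewrite CV_radius_derive.
    exact (Rabs_lt_CV_radius_one x Hx).
Qed.

Lemma somos_partial_S t N : 0 < t ->
  somos_partial t (S N) = exp (sum_n (log_somos_term (/ t)) N).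
Proof.
  intro Ht. induction N as [|N IH].
  - rewrite sum_O. unfold somos_partial, Rpower, log_somos_term.
    rewrite pow_inv, Rmult_1_l. reflexivity.
  - rewrite sum_Sn. change (somos_partial t (S (S N)))
      with (somos_partial t (S N) * Rpower (INR (S (S N))) (/ t ^ S (S N))).
    rewrite IH. unfold Rpower, log_somos_term. rewrite <- exp_plus, pow_inv. reflexivity.
Qed.

Lemma somos_sigma_exp t : 1 < t -> somos_sigma t = exp (Series (log_somos_term (/ t))).
Proof.
  intro Ht. destruct (Rinv_open_unit t Ht) as [Hx0 Hx1].
  assert (Hx : Rabs (/ t) < 1) by (rewrite Rabs_pos_eq; lra).
  unfold somos_sigma.
  rewrite (is_lim_seq_unique _ (exp (Series (log_somos_term (/ t))))); [reflexivity|].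
  apply is_lim_seq_incr_1.
  apply is_lim_seq_ext with (fun N => exp (sum_n (log_somos_term (/ t)) N)).
  { intro N. symmetry. apply somos_partial_S. lra. }
  apply is_lim_seq_continuous; [apply derivable_continuous_pt, derivable_pt_exp|].
  exact (Series_correct _ (ex_series_log_somos_term _ Hx)).
Qed.

Lemma is_series_pow_ln_S x : x <> 0 -> Rabs x < 1 ->
  is_series (fun k => x ^ k * ln (INR (S k))) (Series (log_somos_term x) / x).
Proof.
  intros Hx0 Hx.
  pose proof (Series_correct _ (ex_series_log_somos_term x Hx)) as H.
  refine (is_series_ext _ _ _ _ (is_series_scal_r (/ x) _ _ H)).
  intro k. unfold log_somos_term. rewrite <- tech_pow_Rmult.
  apply Rminus_diag_uniq. field. exact Hx0.
Qed.

Lemma is_series_pow_ln_SS x : x <> 0 -> Rabs x < 1 ->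
  is_series (fun k => x ^ k * ln (INR (S (S k)))) (Series (log_somos_term x) / x ^ 2).
Proof.
  intros Hx0 Hx.
  pose proof (Series_correct _ (ex_series_log_somos_term x Hx)) as H.
  assert (H1 : is_series (fun k => log_somos_term x (S k)) (Series (log_somos_term x))).
  { apply is_series_incr_1. unfold plus, log_somos_term; simpl.
    rewrite ln_1, Rmult_0_r, Rplus_0_r. exact H. }
  refine (is_series_ext _ _ _ _ (is_series_scal_r (/ x ^ 2) _ _ H1)).
  intro k. unfold log_somos_term. rewrite <- !tech_pow_Rmult.
  apply Rminus_diag_uniq. field. exact Hx0.
Qed.

Lemma gamma_fn_log_somos x : x <> 0 -> Rabs x < 1 ->
  gamma_fn x = - ln (1 - x) / x - (1 - x) / x ^ 2 * Series (log_somos_term x).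
Proof.
  intros Hx0 Hx.
  pose proof (is_series_minus _ _ _ _ (is_series_pow_div_S x Hx0 Hx)
    (is_series_minus _ _ _ _ (is_series_pow_ln_SS x Hx0 Hx) (is_series_pow_ln_S x Hx0 Hx))) as H.
  unfold gamma_fn. erewrite is_series_unique.
  2:{ refine (is_series_ext _ _ _ _ H). intro k.
      pose proof (INR_S_ge_1 k). pose proof (INR_S_ge_1 (S k)).
      rewrite ln_div by lra. unfold plus, opp. cbn -[INR pow]. apply Rminus_diag_uniq. field. lra. }
  unfold plus, opp; simpl. field. exact Hx0.
Qed.

Lemma gamma_fn_inv_somos_sigma t : 1 < t ->
  gamma_fn (/ t) = t * ln (t / ((t - 1) * Rpower (somos_sigma t) (t - 1))).
Proof.
  intro Ht. destruct (Rinv_open_unit t Ht) as [Hx0 Hx1].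
  rewrite gamma_fn_log_somos, somos_sigma_exp; [| lra | lra | rewrite Rabs_pos_eq; lra].
  set (L := Series (log_somos_term (/ t))).
  unfold Rpower. rewrite ln_exp.
  pose proof (exp_pos ((t - 1) * L)).
  rewrite ln_div, ln_mult, ln_exp by (try apply Rmult_lt_0_compat; lra).
  replace (1 - / t) with ((t - 1) / t) by (field; lra).
  rewrite ln_div by lra. field. lra.
Qed.

Definition gamma_coef (k : nat) : R := / INR (S k) - ln (INR (S (S k)) / INR (S k)).

Lemma gamma_fn_PSeries x : gamma_fn x = PSeries gamma_coef x.
Proof. apply Series_ext. intro k. apply Rmult_comm. Qed.

Lemma gamma_coef_bounds k : 0 <= gamma_coef k <= / INR (S k) - / INR (S (S k)).
Proof.
  unfold gamma_coef. pose proof (INR_S_ge_1 k).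
  rewrite (S_INR (S k)). set (n := INR (S k)) in *.
  assert (Hq : 0 < (n + 1) / n) by (apply Rdiv_lt_0_compat; lra).
  pose proof (ln_le_sub_1 _ Hq). pose proof (ln_ge_1_sub_inv _ Hq).
  replace ((n + 1) / n - 1) with (/ n) in * by (field; lra).
  replace (1 - / ((n + 1) / n)) with (/ (n + 1)) in * by (field; lra).
  lra.
Qed.

Lemma sum_n_gamma_coef_le N : sum_n gamma_coef N <= 1 - / INR (S (S N)).
Proof.
  induction N as [|N IH].
  - rewrite sum_O. pose proof (gamma_coef_bounds 0) as H. simpl INR in H |- *. lra.
  - rewrite sum_Sn. pose proof (gamma_coef_bounds (S N)).
    change (sum_n gamma_coef N + gamma_coef (S N) <= 1 - / INR (S (S (S N)))). lra.
Qed.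

Lemma ex_series_gamma_coef : ex_series gamma_coef.
Proof.
  apply (ex_series_nonneg_bounded _ 1).
  - intro k. apply gamma_coef_bounds.
  - intro N. pose proof (sum_n_gamma_coef_le N).
    assert (0 < / INR (S (S N))) by (apply Rinv_0_lt_compat; pose proof (INR_S_ge_1 (S N)); lra).
    lra.
Qed.

Lemma filterlim_gamma_fn_at_left_1 : filterlim gamma_fn (at_left 1) (locally (gamma_fn 1)).
Proof.
  rewrite gamma_fn_PSeries, PSeries_1.
  apply filterlim_ext with (PSeries gamma_coef).
  - intro x. symmetry. apply gamma_fn_PSeries.
  - exact (filterlim_PSeries_at_left_1 _ ex_series_gamma_coef).
Qed.

Lemma filterlim_Rinv_mult_exp_gamma_fn :
  filterlim (fun x => / x * exp (- (x * gamma_fn x))) (at_left 1)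
    (locally (exp (- gamma_fn 1))).
Proof.
  assert (Hid : filterlim (fun x : R => x) (at_left 1) (locally 1))
    by exact (filterlim_filter_le_1 _ (filter_le_within _) (filterlim_id _ _)).
  assert (Hinv : filterlim (fun x => / x) (at_left 1) (locally (/ 1))).
  { eapply filterlim_comp; [exact Hid|]. apply (filterlim_Rbar_inv 1).
    intro H. injection H. lra. }
  assert (Hmul : filterlim (fun x => x * gamma_fn x) (at_left 1) (locally (gamma_fn 1))).
  { rewrite <- (Rmult_1_l (gamma_fn 1)).
    exact (filterlim_comp_2 _ _ _ Hid filterlim_gamma_fn_at_left_1 (filterlim_mult _ _)). }
  assert (Hexp : filterlim (fun x => exp (- (x * gamma_fn x))) (at_left 1)
                   (locally (exp (- gamma_fn 1)))).
  { eapply filterlim_comp; [|apply continuous_exp].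
    eapply filterlim_comp; [exact Hmul | apply (filterlim_opp (V := R_NormedModule))]. }
  replace (exp (- gamma_fn 1)) with (mult (/ 1) (exp (- gamma_fn 1)))
    by (unfold mult; simpl; rewrite Rinv_1; ring).
  exact (filterlim_comp_2 _ _ _ Hinv Hexp (filterlim_mult _ _)).
Qed.

Lemma mul_Rpower_somos_sigma t : 0 < t ->
  t * Rpower (somos_sigma (t + 1)) t = (t + 1) * exp (- (gamma_fn (/ (t + 1)) / (t + 1))).
Proof.
  intro Ht.
  assert (HP : 0 < t * Rpower (somos_sigma (t + 1)) t)
    by (apply Rmult_lt_0_compat; [lra | apply exp_pos]).
  rewrite gamma_fn_inv_somos_sigma by lra. replace (t + 1 - 1) with t by ring.
  rewrite ln_div by lra.
  replace (- ((t + 1) * (ln (t + 1) - ln (t * Rpower (somos_sigma (t + 1)) t)) / (t + 1)))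
    with (ln (t * Rpower (somos_sigma (t + 1)) t) - ln (t + 1)) by (field; lra).
  rewrite <- ln_div, exp_ln by (try apply Rdiv_lt_0_compat; lra).
  field. lra.
Qed.

Lemma filterlim_inv_S_at_right_0 : filterlim (fun t => / (t + 1)) (at_right 0) (at_left 1).
Proof.
  intros P [eps HP]. exists eps. intros t Ht Ht0.
  change (Rabs (t - 0) < eps) in Ht. rewrite Rminus_0_r, Rabs_pos_eq in Ht by lra.
  assert (Hinv : / (t + 1) < 1) by (rewrite <- Rinv_1; apply Rinv_lt_contravar; lra).
  apply HP; [|exact Hinv].
  change (Rabs (/ (t + 1) - 1) < eps).
  replace (/ (t + 1) - 1) with (- (t / (t + 1))) by (field; lra).
  rewrite Rabs_Ropp, Rabs_pos_eq by (apply Rdiv_le_0_compat; lra).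
  apply Rle_lt_trans with t; [|exact Ht].
  apply Rmult_le_reg_r with (t + 1); [lra|]. field_simplify; nra.
Qed.

Theorem theorem18 :
  (forall t : R, 1 < t ->
     gamma_fn (/ t) = t * ln (t / ((t - 1) * Rpower (somos_sigma t) (t - 1))))
  /\ filterlim (fun t : R => t * Rpower (somos_sigma (t + 1)) t) (at_right 0)
       (locally (exp (- gamma_fn 1))).
Proof.
  split; [exact gamma_fn_inv_somos_sigma|].
  apply filterlim_ext_loc with
    (fun t => (fun x => / x * exp (- (x * gamma_fn x))) (/ (t + 1))).
  - exists (mkposreal 1 Rlt_0_1). intros t _ Ht.
    rewrite mul_Rpower_somos_sigma, Rinv_inv by exact Ht.
    unfold Rdiv. rewrite Rmult_comm with (r1 := gamma_fn _). reflexivity.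
  - exact (filterlim_comp _ _ _ _ _ _ _ _ filterlim_inv_S_at_right_0
             filterlim_Rinv_mult_exp_gamma_fn).
Qed.
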